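(* Let $b>0$ and define, for $r>0$, \[ \begin{aligned} \underline u_{\rm out}(r)&= Lr^{-m}-br^{-l},\\ \underline v_{\rm out}(r)&= m(n-2-m)Lr^{-m-2}- l(n-2-l)br^{-l-2},\\ \underline w_{\rm out}(r)&= m(m+2)(n-2-m)(n-4-m)Lr^{-m-4}- l(l+2)(n-2-l)(n-4-l)br^{-l-4}, \end{aligned} \] and $\underline r_1=(b/L)^{1/(l-m)}$. Then \[ -\Delta \underline u_{\rm out} =\underline v_{\rm out} \ \text{ for all } r>0,\qquad -\Delta \underline v_{\rm out} =\underline w_{\rm out} \ \text{ for all } r>0,\qquad -\Delta \underline w_{\rm out} \leqslant \underline u_{\rm out}^p \ \text{ for all } r>\underline r_1 . \]
   Context: Let $n\geqslant 15$ and $p>p_{\mathsf{JL}}(6,n)$, where $p_{\mathsf{JL}}(6,n)=\frac{(n+4)\sqrt{3} - \sqrt{\sqrt[3]{K_0+K_1}+ \sqrt[3]{K_0-K_1} + 3n^2+32 }}{(n-8)\sqrt{3} - \sqrt{\sqrt[3]{K_0+K_1} + \sqrt[3]{K_0-K_1} + 3n^2+32 }}$ with $2K_0 =-27n^6+324 n^5-756n^4-2592 n^3 + 25776 n^2 +5184 n -23744$, $2K_1 = \sqrt{(2K_0)^2 - 4(192n^2+256)^3}$. Let $m=6/(p-1)$, $L=\big(m(m+2)(m+4)(n-2-m)(n-4-m)(n-6-m)\big)^{1/(p-1)}$, and let $\lambda_3$ be the smallest positive root of $P(\lambda)=(m+\lambda)(m+\lambda+2)(m+\lambda+4)(n-2-m-\lambda)(n-4-m-\lambda)(n-6-m-\lambda)-pL^{p-1}$;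 set $l=m+\lambda_3$. For a function $f$ of $r>0$, $\Delta f$ denotes the Laplacian in $\mathbf R^n$ of $x\mapsto f(|x|)$, i.e. $f''+\frac{n-1}{r}f'$. *)

From Stdlib Require Import Reals Lra.
From Coquelicot Require Import Coquelicot.
Open Scope R_scope.

Definition cbrt (x : R) : R :=
  if Rlt_dec 0 x then Rpower x (1/3)
  else if Rlt_dec x 0 then - Rpower (- x) (1/3) else 0.

Definition K0 (n : nat) : R :=
  let N := INR n in
  (-27 * N^6 + 324 * N^5 - 756 * N^4 - 2592 * N^3 + 25776 * N^2
   + 5184 * N - 23744) / 2.

Definition K1 (n : nat) : R :=
  let N := INR n in
  sqrt ((2 * K0 n)^2 - 4 * (192 * N^2 + 256)^3) / 2.

Definition pJL6 (n : nat) : R :=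
  let N := INR n in
  let S := cbrt (K0 n + K1 n) + cbrt (K0 n - K1 n) + 3 * N^2 + 32 in
  ((N + 4) * sqrt 3 - sqrt S) / ((N - 8) * sqrt 3 - sqrt S).

Definition mexp (p : R) : R := 6 / (p - 1).

Definition Lconst (n : nat) (p : R) : R :=
  let N := INR n in let m := mexp p in
  Rpower (m * (m + 2) * (m + 4) * (N - 2 - m) * (N - 4 - m) * (N - 6 - m))
         (1 / (p - 1)).

Definition Ppoly (n : nat) (p lam : R) : R :=
  let N := INR n in let m := mexp p in
  (m + lam) * (m + lam + 2) * (m + lam + 4) * (N - 2 - m - lam)
  * (N - 4 - m - lam) * (N - 6 - m - lam) - p * Rpower (Lconst n p) (p - 1).

Definition radLap (n : nat) (f : R -> R) (r : R) : R :=
  Derive (Derive f) r + (INR n - 1) / r * Derive f r.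

Definition u_out (n : nat) (p b l : R) (r : R) : R :=
  let m := mexp p in let L := Lconst n p in
  L * Rpower r (- m) - b * Rpower r (- l).

Definition v_out (n : nat) (p b l : R) (r : R) : R :=
  let N := INR n in let m := mexp p in let L := Lconst n p in
  m * (N - 2 - m) * L * Rpower r (- m - 2)
  - l * (N - 2 - l) * b * Rpower r (- l - 2).

Definition w_out (n : nat) (p b l : R) (r : R) : R :=
  let N := INR n in let m := mexp p in let L := Lconst n p in
  m * (m + 2) * (N - 2 - m) * (N - 4 - m) * L * Rpower r (- m - 4)
  - l * (l + 2) * (N - 2 - l) * (N - 4 - l) * b * Rpower r (- l - 4).

Definition r1_out (n : nat) (p b l : R) : R :=
  Rpower (b / Lconst n p) (1 / (l - mexp p)).

From Stdlib Require Import Reals Lra List.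
Import ListNotations.
From Coquelicot Require Import Coquelicot.
Open Scope R_scope.

(* With m = mexp p, U = L r^-m solves (-Δ)^3 U = U^p exactly, and P(λ3) = 0
   says precisely that r^-l solves the linearised equation
   (-Δ)^3 φ = p U^(p-1) φ.  Hence, with x = L r^-m and y = b r^-l,
   -Δ w_out = x^p - p x^(p-1) y, which by convexity of t ↦ t^p lies below
   (x - y)^p = u_out^p as soon as y < x, i.e. r > r1.  Convexity needs p ≥ 1
   and L^(p-1) = m(m+2)(m+4)(n-2-m)(n-4-m)(n-6-m) needs m < n - 6; both
   follow from p > pJL(6,n) > n/(n-6), which is read off the Cardano formula
   defining pJL(6,n). *)

Lemma Rpower_pos x y : 0 < Rpower x y.
Proof. apply exp_pos. Qed.

Lemma Rpower_root_pow x q : 0 < x -> q <> 0 -> Rpower (Rpower x (1 / q)) q = x.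
Proof.
  intros Hx Hq. rewrite Rpower_mult.
  replace (1 / q * q) with 1 by (field; exact Hq).
  apply Rpower_1, Hx.
Qed.

Fixpoint horner (k : R) (cs : list R) : R :=
  match cs with [] => 0 | c :: cs => c + k * horner k cs end.

Lemma horner_pos k c cs :
  0 <= k -> List.Forall (Rlt 0) (c :: cs) -> 0 < horner k (c :: cs).
Proof.
  intro Hk; revert c; induction cs as [|d cs IH]; intros c Hcs;
    inversion Hcs as [|? ? Hc Htl]; simpl in *.
  - lra.
  - pose proof (IH d Htl); simpl in *; nra.
Qed.

Lemma cube_root_sum_cube A B P :
  0 < A -> 0 < B -> 0 < P -> A * B = P ^ 3 ->
  let s := Rpower A (1/3) + Rpower B (1/3) in s ^ 3 = A + B + 3 * P * s.
Proof.
  intros HA HB HP HAB s.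
  assert (Hcube : forall C, 0 < C -> Rpower C (1/3) ^ 3 = C).
  { intros C HC. rewrite <- Rpower_pow by apply Rpower_pos.
    replace (INR 3) with 3 by (simpl; ring).
    apply Rpower_root_pow; lra. }
  assert (Hprod : Rpower A (1/3) * Rpower B (1/3) = P).
  { rewrite Rpower_mult_distr, HAB by assumption.
    rewrite <- Rpower_pow by exact HP. replace (INR 3) with 3 by (simpl; ring).
    rewrite Rpower_mult. replace (3 * (1/3)) with 1 by field.
    apply Rpower_1, HP. }
  unfold s.
  replace ((Rpower A (1/3) + Rpower B (1/3)) ^ 3) with
    (Rpower A (1/3) ^ 3 + Rpower B (1/3) ^ 3
     + 3 * (Rpower A (1/3) * Rpower B (1/3)) * (Rpower A (1/3) + Rpower B (1/3)))
    by ring.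
  rewrite Hcube, Hcube, Hprod by assumption. reflexivity.
Qed.

(* s ≤ c would give T ≤ s (c^2 - 3P) ≤ max 0 (c (c^2 - 3P)) < T. *)
Lemma depressed_cubic_root_gt T P c s :
  0 < T -> 0 < P -> 0 < c -> 0 < s ->
  s ^ 3 = T + 3 * P * s -> c ^ 3 < T + 3 * P * c -> c < s.
Proof.
  intros HT HP Hc Hs Hcubic Hgap.
  destruct (Rlt_or_le c s) as [|Hsc]; [assumption|exfalso].
  assert (Hneg : s * ((s - c) * (s + c)) <= 0).
  { apply Rmult_le_0_l; [lra|]. apply Rmult_le_0_r; lra. }
  assert (HsT : T <= s * (c ^ 2 - 3 * P)) by nra.
  destruct (Rle_or_lt (c ^ 2) (3 * P)); nra.
Qed.

Lemma cbrt_neg x : x < 0 -> cbrt x = - Rpower (- x) (1/3).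
Proof.
  intro Hx; unfold cbrt.
  destruct (Rlt_dec 0 x); [lra|].
  destruct (Rlt_dec x 0); [reflexivity|lra].
Qed.

Section JosephLundgren.

Variable n : nat.
Hypothesis Hn : 15 <= INR n.

Let N := INR n.
Let P := 192 * N ^ 2 + 256.
Let c := 48 * N - 160.
Let D := (2 * K0 n) ^ 2 - 4 * P ^ 3.

(* The three polynomial inequalities below are positivity of polynomials in
   N - 15 with positive coefficients. *)
Lemma K0_neg : K0 n < 0.
Proof.
  assert (E : - 2 * K0 n = horner (N - 15)
    [102676259; 52183386; 10679589; 1141452; 67581; 2106; 27])
    by (unfold K0, N; simpl; field).
  assert (0 < horner (N - 15)
    [102676259; 52183386; 10679589; 1141452; 67581; 2106; 27])
    by (apply horner_pos; [unfold N; lra | repeat constructor; lra]).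
  lra.
Qed.

Lemma K0_discriminant_pos : 0 < D.
Proof.
  replace D with (horner (N - 15)
    [10214160759983817; 10585461850409628; 4894534148604354; 1347076448060364;
     246965545626615; 31863611628216; 2971699904988; 202081266936;
     9951685191; 346289580; 8084610; 113724; 729])
    by (unfold D, P, K0, N; simpl; field).
  apply horner_pos; [unfold N; lra | repeat constructor; lra].
Qed.

Lemma K0_cubic_gap : c ^ 3 < - 2 * K0 n + 3 * P * c.
Proof.
  assert (E : - 2 * K0 n + 3 * P * c - c ^ 3 = horner (N - 15)
    [66339; 22959450; 7960869; 1058508; 67581; 2106; 27])
    by (unfold K0, P, c, N; simpl; field).
  assert (0 < horner (N - 15)
    [66339; 22959450; 7960869; 1058508; 67581; 2106; 27])
    by (apply horner_pos; [unfold N; lra | repeat constructor; lra]).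
  lra.
Qed.

Lemma cbrt_K_sum_lt : cbrt (K0 n + K1 n) + cbrt (K0 n - K1 n) < - c.
Proof.
  pose proof K0_neg as HK0. pose proof K0_discriminant_pos as HD.
  assert (HK1 : K1 n = sqrt D / 2) by reflexivity.
  assert (HP : 0 < P) by (unfold P; nra).
  assert (HsqrtD : sqrt D < - 2 * K0 n).
  { rewrite <- (sqrt_pow2 (- 2 * K0 n)) by lra.
    apply sqrt_lt_1_alt. split; [lra|].
    assert (0 < P ^ 3) by (apply pow_lt; lra).
    unfold D; nra. }
  pose proof (sqrt_pos D).
  assert (HAB : (- (K0 n + K1 n)) * (- (K0 n - K1 n)) = P ^ 3).
  { rewrite HK1.
    replace (- (K0 n + sqrt D / 2) * - (K0 n - sqrt D / 2))
      with (K0 n ^ 2 - sqrt D ^ 2 / 4) by field.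
    rewrite pow2_sqrt by lra. unfold D; field. }
  rewrite !cbrt_neg by lra.
  pose proof (cube_root_sum_cube (- (K0 n + K1 n)) (- (K0 n - K1 n)) P
    ltac:(lra) ltac:(lra) HP HAB) as Hcubic; cbv zeta in Hcubic.
  assert (Hc : 0 < c) by (unfold c, N in *; lra).
  pose proof (Rpower_pos (- (K0 n + K1 n)) (1/3)).
  pose proof (Rpower_pos (- (K0 n - K1 n)) (1/3)).
  enough (c < Rpower (- (K0 n + K1 n)) (1/3) + Rpower (- (K0 n - K1 n)) (1/3))
    by lra.
  apply (depressed_cubic_root_gt (- 2 * K0 n) P);
    [lra | exact HP | exact Hc | lra | rewrite Hcubic; ring | exact K0_cubic_gap].
Qed.

End JosephLundgren.

Lemma shifted_ratio_gt N a q :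
  0 < a -> 0 <= q < (N - 8) * a ->
  N / (N - 6) < ((N + 4) * a - q) / ((N - 8) * a - q).
Proof.
  intros Ha Hq.
  assert (HN : 8 < N).
  { destruct (Rle_or_lt N 8) as [HN|HN]; [|exact HN].
    assert ((N - 8) * a <= 0) by (apply Rmult_le_0_r; lra). lra. }
  set (d := (N - 8) * a - q).
  assert (Hd : 0 < d) by (unfold d; lra).
  replace ((N + 4) * a - q) with (d + 12 * a) by (unfold d; ring).
  apply (Rmult_lt_reg_r (d * (N - 6))); [nra|].
  replace (N / (N - 6) * (d * (N - 6))) with (N * d) by (field; lra).
  replace ((d + 12 * a) / d * (d * (N - 6))) with ((d + 12 * a) * (N - 6))
    by (field; lra).
  assert (d <= (N - 8) * a) by (unfold d; lra).
  nra.
Qed.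

Lemma pJL6_gt n : (15 <= n)%nat -> INR n / (INR n - 6) < pJL6 n.
Proof.
  intro Hn. apply le_INR in Hn. replace (INR 15) with 15 in Hn by (simpl; ring).
  pose proof (cbrt_K_sum_lt n Hn) as Hsum.
  unfold pJL6; cbv zeta.
  set (S := cbrt (K0 n + K1 n) + cbrt (K0 n - K1 n) + 3 * INR n ^ 2 + 32).
  assert (Hsqrt3 : 0 < sqrt 3) by (apply sqrt_lt_R0; lra).
  assert (HS : sqrt S < (INR n - 8) * sqrt 3).
  { destruct (Rle_or_lt S 0).
    - rewrite sqrt_neg_0 by assumption. nra.
    - replace ((INR n - 8) * sqrt 3) with (sqrt (3 * (INR n - 8) ^ 2)).
      + apply sqrt_lt_1_alt.
        replace (3 * (INR n - 8) ^ 2) with (3 * INR n ^ 2 - 48 * INR n + 192) by ring.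
        unfold S in *; lra.
      + rewrite sqrt_mult, sqrt_pow2 by nra. ring. }
  apply shifted_ratio_gt; [assumption|].
  split; [apply sqrt_pos | assumption].
Qed.

Lemma mexp_bounds N p :
  6 < N -> N / (N - 6) < p -> 1 < p /\ 0 < mexp p < N - 6.
Proof.
  intros HN Hp.
  assert (Hratio : N / (N - 6) = 1 + 6 / (N - 6)) by (field; lra).
  assert (0 < 6 / (N - 6)) by (apply Rdiv_lt_0_compat; lra).
  assert (Hp1 : 6 < (N - 6) * (p - 1)).
  { apply (Rmult_lt_reg_r (/ (N - 6))); [apply Rinv_0_lt_compat; lra|].
    replace ((N - 6) * (p - 1) * / (N - 6)) with (p - 1) by (field; lra).
    unfold Rdiv in *; lra. }
  unfold mexp; repeat split; [lra | apply Rdiv_lt_0_compat; lra |].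
  apply (Rmult_lt_reg_r (p - 1)); [lra|].
  replace (6 / (p - 1) * (p - 1)) with 6 by (field; lra). lra.
Qed.

Lemma Derive_Rpower_diff A B a c x : 0 < x ->
  Derive (fun y => A * Rpower y a - B * Rpower y c) x
  = A * a * Rpower x (a - 1) - B * c * Rpower x (c - 1).
Proof.
  intro Hx. apply is_derive_unique.
  replace (A * a * Rpower x (a - 1) - B * c * Rpower x (c - 1))
    with (A * (a * Rpower x (a - 1)) - B * (c * Rpower x (c - 1))) by ring.
  apply (is_derive_minus (fun y => A * Rpower y a) (fun y => B * Rpower y c));
    apply is_derive_scal, is_derive_Reals, derivable_pt_lim_power, Hx.
Qed.

Lemma radLap_Rpower_diff n A B a c r : 0 < r ->
  radLap n (fun y => A * Rpower y a - B * Rpower y c) r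
  = A * a * (a + INR n - 2) * Rpower r (a - 2)
    - B * c * (c + INR n - 2) * Rpower r (c - 2).
Proof.
  intro Hr. unfold radLap.
  rewrite (Derive_ext_loc _
    (fun y => (A * a) * Rpower y (a - 1) - (B * c) * Rpower y (c - 1))).
  2: { apply (filter_imp (fun y => 0 < y)); [intros; apply Derive_Rpower_diff; assumption|].
       apply (open_gt 0 r Hr). }
  rewrite !Derive_Rpower_diff by exact Hr.
  replace (a - 1) with ((a - 2) + 1) by ring.
  replace (c - 1) with ((c - 2) + 1) by ring.
  replace (a - 2 + 1 - 1) with (a - 2) by ring.
  replace (c - 2 + 1 - 1) with (c - 2) by ring.
  rewrite !Rpower_plus, !Rpower_1 by exact Hr.
  field. lra.
Qed.

(* [symbol n a * r^(-a-6)] is (-Δ)^3 applied to r^-a in R^n. *)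
Definition symbol (n : nat) (a : R) : R :=
  let N := INR n in a * (a + 2) * (a + 4) * (N - 2 - a) * (N - 4 - a) * (N - 6 - a).

Lemma symbol_pos n a : 0 < a < INR n - 6 -> 0 < symbol n a.
Proof.
  intro Ha; unfold symbol.
  do 5 (apply Rmult_lt_0_compat; [|lra]). lra.
Qed.

Lemma Lconst_pow n p :
  1 < p -> 0 < symbol n (mexp p) -> Rpower (Lconst n p) (p - 1) = symbol n (mexp p).
Proof. intros Hp Hsym. apply Rpower_root_pow; lra. Qed.

Lemma Ppoly_symbol n p lam :
  Ppoly n p lam = symbol n (mexp p + lam) - p * Rpower (Lconst n p) (p - 1).
Proof. unfold Ppoly, symbol; cbv zeta; ring. Qed.

Lemma neg_radLap_u_out n p b l r : 0 < r ->
  - radLap n (u_out n p b l) r = v_out n p b l r.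
Proof.
  intro Hr; unfold u_out, v_out; cbv zeta.
  rewrite radLap_Rpower_diff by exact Hr. ring.
Qed.

Lemma neg_radLap_v_out n p b l r : 0 < r ->
  - radLap n (v_out n p b l) r = w_out n p b l r.
Proof.
  intro Hr; unfold v_out, w_out; cbv zeta.
  rewrite radLap_Rpower_diff by exact Hr.
  replace (- mexp p - 2 - 2) with (- mexp p - 4) by ring.
  replace (- l - 2 - 2) with (- l - 4) by ring. ring.
Qed.

Lemma neg_radLap_w_out n p b l r : 0 < r ->
  - radLap n (w_out n p b l) r
  = symbol n (mexp p) * Lconst n p * Rpower r (- mexp p - 6)
    - symbol n l * b * Rpower r (- l - 6).
Proof.
  intro Hr; unfold w_out, symbol; cbv zeta.
  rewrite radLap_Rpower_diff by exact Hr.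
  replace (- mexp p - 4 - 2) with (- mexp p - 6) by ring.
  replace (- l - 4 - 2) with (- l - 6) by ring. ring.
Qed.

(* Mean value theorem on [x - y, x]; the derivative p t^(p-1) is
   nondecreasing since p ≥ 1. *)
Lemma Rpower_sub_ge p x y : 1 <= p -> 0 < y < x ->
  Rpower x p - p * Rpower x (p - 1) * y <= Rpower (x - y) p.
Proof.
  intros Hp Hxy.
  destruct (MVT_cor2 (fun t => Rpower t p) (fun t => p * Rpower t (p - 1)) (x - y) x)
    as [z [Hmvt Hz]]; [lra | intros; apply derivable_pt_lim_power; lra |].
  assert (Rpower z (p - 1) <= Rpower x (p - 1)) by (apply Rle_Rpower_l; lra).
  replace (x - (x - y)) with y in Hmvt by ring.
  assert (p * y * Rpower z (p - 1) <= p * y * Rpower x (p - 1))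
    by (apply Rmult_le_compat_l; nra).
  lra.
Qed.

Lemma Rpower_two_terms_lt L b m l r :
  0 < L -> 0 < b -> m < l -> Rpower (b / L) (1 / (l - m)) < r ->
  b * Rpower r (- l) < L * Rpower r (- m).
Proof.
  intros HL Hb Hml Hr.
  pose proof (Rpower_pos (b / L) (1 / (l - m))) as Hr1.
  assert (Hlt : b / L < Rpower r (l - m)).
  { rewrite <- (Rpower_root_pow (b / L) (l - m)) by (try apply Rdiv_lt_0_compat; lra).
    apply Rlt_Rpower_l; lra. }
  assert (Hsplit : Rpower r (- m) = Rpower r (l - m) * Rpower r (- l)).
  { rewrite <- Rpower_plus. f_equal. ring. }
  pose proof (Rpower_pos r (- l)).
  rewrite Hsplit.
  replace (b * Rpower r (- l)) with (L * (b / L) * Rpower r (- l)) by (field; lra).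
  rewrite <- Rmult_assoc.
  apply Rmult_lt_compat_r, Rmult_lt_compat_l; assumption.
Qed.

Lemma profile_power_ge L b m l p r :
  0 < L -> 0 < b -> 1 <= p -> m * (p - 1) = 6 ->
  b * Rpower r (- l) < L * Rpower r (- m) ->
  Rpower L (p - 1) * L * Rpower r (- m - 6)
  - p * Rpower L (p - 1) * b * Rpower r (- l - 6)
  <= Rpower (L * Rpower r (- m) - b * Rpower r (- l)) p.
Proof.
  intros HL Hb Hp Hm Hyx.
  assert (Hxp : Rpower (L * Rpower r (- m)) p = Rpower L (p - 1) * L * Rpower r (- m - 6)).
  { rewrite <- Rpower_mult_distr, Rpower_mult by (apply Rpower_pos || assumption).
    replace p with ((p - 1) + 1) at 1 by ring.
    rewrite Rpower_plus, Rpower_1 by assumption.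
    replace (- m * p) with (- m - 6) by lra. ring. }
  assert (Hxp1 : p * Rpower L (p - 1) * b * Rpower r (- l - 6)
                 = p * Rpower (L * Rpower r (- m)) (p - 1) * (b * Rpower r (- l))).
  { rewrite <- Rpower_mult_distr, Rpower_mult by (apply Rpower_pos || assumption).
    replace (- l - 6) with (- m * (p - 1) + - l) by lra.
    rewrite Rpower_plus. ring. }
  rewrite Hxp1, <- Hxp.
  apply Rpower_sub_ge; [assumption|].
  split; [apply Rmult_lt_0_compat; [|apply Rpower_pos]|]; assumption.
Qed.

Theorem lemma3p1 (n : nat) (p b lam3 : R)
  (Hn : (15 <= n)%nat) (Hp : p > pJL6 n) (Hb : b > 0)
  (Hlam_pos : 0 < lam3) (Hlam_root : Ppoly n p lam3 = 0)
  (Hlam_min : forall lam, 0 < lam < lam3 -> Ppoly n p lam <> 0) :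
  let l := mexp p + lam3 in
  (forall r, r > 0 -> - radLap n (u_out n p b l) r = v_out n p b l r) /\
  (forall r, r > 0 -> - radLap n (v_out n p b l) r = w_out n p b l r) /\
  (forall r, r > r1_out n p b l ->
     - radLap n (w_out n p b l) r <= Rpower (u_out n p b l r) p).
Proof.
  intro l.
  assert (HN : 6 < INR n) by (apply le_INR in Hn; simpl in Hn; lra).
  destruct (mexp_bounds (INR n) p HN ltac:(pose proof (pJL6_gt n Hn); lra))
    as [Hp1 Hm].
  pose proof (Lconst_pow n p Hp1 (symbol_pos n (mexp p) Hm)) as HLpow.
  assert (HL : 0 < Lconst n p) by apply Rpower_pos.
  split; [|split]; intros r Hr.
  - apply neg_radLap_u_out; lra.
  - apply neg_radLap_v_out; lra.
  - assert (Hr1 : 0 < r1_out n p b l) by apply Rpower_pos.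
    rewrite neg_radLap_w_out by lra.
    rewrite Ppoly_symbol in Hlam_root.
    replace (symbol n l) with (p * Rpower (Lconst n p) (p - 1)) by (unfold l; lra).
    rewrite <- HLpow.
    apply profile_power_ge; [exact HL | lra | lra | unfold mexp; field; lra |].
    apply Rpower_two_terms_lt; [exact HL | lra | unfold l; lra | exact Hr].
Qed.
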